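(* Let $d\ge2$ and consider the cubical cell structure on $\mathbb{R}^d$ given by $\mathbb{Z}^d$. For all $(d-1)$-cells $c,c'$, $$S_cS_{c'}=S_{c'}S_c\,(-1)^{\int\boldsymbol c\cup_{d-2}\boldsymbol c'+\boldsymbol c'\cup_{d-2}\boldsymbol c}$$ and $$U_cU_{c'}=U_{c'}U_c\,(-1)^{\int\boldsymbol c\cup_{d-2}\boldsymbol c'+\boldsymbol c'\cup_{d-2}\boldsymbol c},$$ where $S_c$ and $U_c$ are the operators defined in the context.
   Context: Cells: the $k$-cells are integer translates of faces of unit cubes of $\mathbb{Z}^d$. For a $k$-cell $c$ spanning directions $i_1<\dots<i_k$, its subcells are $c(w)$ for $w\in\{+,-,\bullet\}^k$: $w_r=\pm$ fixes $x_{i_r}$ at its max/min on $c$, and $w_r=\bullet$ leaves it free. A $\mathbb{Z}_2$-valued $p$-cochain is a function from $p$-cells to $\mathbb{Z}_2$, zero on other cells. $\boldsymbol c$ denotes the indicator cochain of the cell $c$. $\int\phi$ of a $d$-cochain $\phi$ is $\sum_{d\text{-cells}}\phi$ mod 2. Higher cup products: for a $p$-cochain $\alpha$, a $q$-cochain $\beta$, and a $k$-cell $c$ with $k=p+q-m$, $$(\alpha\cup_m\beta)(c)=\sum_{1\le l_1<\dots<l_m\le k}\sum_{(w,w')}\alpha(c(w))\beta(c(w')).$$ The inner sum runs over pairs with $w_{l_r}=w'_{l_r}=\bullet$. At every other position $s$, with $\ell(s)=\#\{r:l_r<s\}$ and $\sigma_s=(-1)^{\ell(s)}\in\{\pm\}$,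 one has $(w_s,w'_s)\in\{(\sigma_s,\bullet),(\bullet,-\sigma_s)\}$. Faces of the wrong dimension contribute zero. Fermions: each $d$-cell $C$ carries two Majorana operators $\gamma_C,\gamma'_C$. All of them are Hermitian, square to $1$ and pairwise anticommute. For a $(d-1)$-cell $c$ perpendicular to the $x_i$-direction, let ${}^\pm c$ be the $d$-cell adjacent to $c$ in the $\pm x_i$ direction. Set $(L(c),R(c))=({}^-c,{}^+c)$ if $i+d$ is odd, and $(L(c),R(c))=({}^+c,{}^-c)$ if $i+d$ is even. Define $S_c=i\gamma_{L(c)}\gamma'_{R(c)}$. Bosons: each $(d-1)$-cell $c$ carries a qubit with Pauli operators $X_c,Z_c$ (operators on distinct cells commute). Define $$U_c=X_c\prod_{c'}Z_{c'}^{\int\boldsymbol c'\cup_{d-2}\boldsymbol c},$$ with the product over all $(d-1)$-cells $c'$. *)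

From HB Require Import structures.
From mathcomp Require Import all_boot all_order all_algebra all_field.
From Stdlib Require Import ClassicalEpsilon.
Set Implicit Arguments.
Unset Strict Implicit.
Unset Printing Implicit Defensive.
Import Order.TTheory GRing.Theory Num.Theory.
Local Open Scope ring_scope.

(* A cell is (x, D): base point x in Z^d and set of spanned directions  *)
(* D (a subset of {0,..,d-1}); it is the set of points y with           *)
(* y_i in [x_i, x_i+1] for i in D and y_i = x_i for i not in D.         *)
(* Direction j : 'I_d corresponds to the paper's x_{j+1}.               *)
Definition point (d : nat) := {ffun 'I_d -> int}.
Definition cell (d : nat) := (point d * {set 'I_d})%type.

Definition is_kcell d (k : nat) (c : cell d) : bool := #|c.2| == k.

Definition dcell d (x : point d) : cell d := (x, [set: 'I_d]).

(* Z_2-valued cochains: functions on cells (a p-cochain is zero off p-cells) *)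
Definition cochain d := cell d -> bool.

Definition ind d (c : cell d) : cochain d := fun c' => c' == c.

(* Subcell c(w).  A word w in {+,-,.}^k is encoded as a function on
   directions: Some true = '+', Some false = '-', None = '.'
   (only its values on the directions of c matter). *)
Definition subcell d (c : cell d) (w : {ffun 'I_d -> option bool}) : cell d :=
  ([ffun i => c.1 i + (((i \in c.2) && (w i == Some true)) : nat)%:Z],
   [set i in c.2 | w i == None]).

(* sigma_s = (-1)^{#{r : l_r < s}} ; true encodes '+' *)
Definition sigma d (L : {set 'I_d}) (s : 'I_d) : bool :=
  ~~ odd #|[set j in L | (j < s)%N]|.

Definition valid_pair d (c : cell d) (L : {set 'I_d})
    (w w' : {ffun 'I_d -> option bool}) : bool :=
  [forall i,
    if i \in c.2 then
      (if i \in L then (w i == None) && (w' i == None)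
       else ((w i == Some (sigma L i)) && (w' i == None))
         || ((w i == None) && (w' i == Some (~~ sigma L i))))
    else (w i == None) && (w' i == None)].

Definition cup d (m : nat) (alpha beta : cochain d) : cochain d :=
  fun c =>
    \big[addb/false]_(L : {set 'I_d} | (L \subset c.2) && (#|L| == m))
      \big[addb/false]_(w : {ffun 'I_d -> option bool})
        \big[addb/false]_(w' : {ffun 'I_d -> option bool} | valid_pair c L w w')
          (alpha (subcell c w) && beta (subcell c w')).

Definition in_box d (N : nat) (x : point d) : bool := [forall i, (`|x i|%N <= N)%N].

Definition box_pts d (N : nat) : seq (point d) :=
  [seq [ffun i => (f i : nat)%:Z - N%:Z] | f : {ffun 'I_d -> 'I_(N + N).+1}].

Definition box_cells d (N : nat) (k : nat) : seq (cell d) :=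
  [seq (x, D) | x : point d <- box_pts d N, D : {set 'I_d} <- enum [set D : {set 'I_d} | #|D| == k]].

(* \int phi = sum over all d-cells of phi, mod 2 (for finitely supported phi;
   N is any box radius outside of which phi vanishes on d-cells). *)
Definition integral d (phi : cochain d) : bool :=
  let N := epsilon (inhabits 0%N)
             (fun N => forall x : point d, ~~ in_box N x -> phi (dcell x) = false) in
  \big[addb/false]_(C <- box_cells d N d) phi C.

Definition unit_vec d (j : 'I_d) : point d := [ffun i => ((i == j) : nat)%:Z].

Definition perp d (c : cell d) : option 'I_d := [pick j | j \notin c.2].

Definition plus_cell d (c : cell d) : cell d := dcell c.1.
Definition minus_cell d (c : cell d) (j : 'I_d) : cell d :=
  dcell [ffun i => c.1 i - unit_vec j i].

(* (L(c), R(c)); paper index i = j+1 *)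
Definition LR d (c : cell d) : cell d * cell d :=
  match perp c with
  | Some j => if odd (j.+1 + d) then (minus_cell c j, plus_cell c)
              else (plus_cell c, minus_cell c j)
  | None => (c, c)
  end.

Definition S_op d (R : algType algC) (gamma gamma' : cell d -> R) (c : cell d) : R :=
  'i *: (gamma (LR c).1 * gamma' (LR c).2).

(* U_c = X_c prod_{c'} Z_{c'}^{\int c' \cup_{d-2} c}; the product ranges over
   (d-1)-cells; all but finitely many factors are 1, and N is a box radius
   outside of which all factors are 1 (the Z's pairwise commute, so the
   order of the finite product is irrelevant). *)
Definition U_op d (B : nzRingType) (X Z : cell d -> B) (c : cell d) : B :=
  let e := fun c' => integral (cup d.-2 (ind c') (ind c)) in
  let N := epsilon (inhabits 0%N)
             (fun N => forall c' : cell d, is_kcell d.-1 c' ->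
                         ~~ in_box N c'.1 -> e c' = false) in
  X c * \prod_(c' <- box_cells d N d.-1) (if e c' then Z c' else 1).

(* For (d-1)-cells a and b normal to the directions j and j', the only term of
   a \cup_{d-2} b that can be nonzero on a d-cell C is the one whose positions l
   are all directions except j and j': it requires a to be the sigma_j-face of C in
   direction j and b its (-sigma_j')-face in direction j'.  Hence \int a \cup b
   vanishes for j = j' and otherwise says that these two faces bound a common
   d-cell.  As sigma_j + sigma_j' = 1 + j + j' (mod 2), and the convention for
   (L(c), R(c)) flips with the parity of the normal direction, the two cup
   integrals together have the parity of [L(a) <> L(b)] + [R(a) <> R(b)]: exactly
   the sign picked up when commuting the Majorana bilinears S_a and S_b.  For the
   bosons, X_a anticommutes with the factor Z_a of U_b exactly when
   \int a \cup b = 1, and X_b with the factor Z_b of U_a exactly when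
   \int b \cup a = 1. *)

From HB Require Import structures.
From mathcomp Require Import all_boot all_order all_algebra all_field.
From mathcomp Require Import zify.
From Stdlib Require Import ClassicalEpsilon.
Set Implicit Arguments.
Unset Strict Implicit.
Unset Printing Implicit Defensive.
Import GRing.Theory Num.Theory.
Local Open Scope ring_scope.

Section SignedCommutation.
Variable R : pzRingType.
Implicit Types x y z : R.

Definition signed_comm x y (k : bool) := x * y = y * x * (-1) ^+ k.

Lemma signed_comm0 x y : GRing.comm x y -> signed_comm x y false.
Proof. by rewrite /signed_comm mulr1. Qed.

Lemma signed_commN x y : x * y = - (y * x) -> signed_comm x y true.
Proof. by rewrite /signed_comm mulrN1. Qed.

Lemma signed_commC x y k : signed_comm x y k -> signed_comm y x k.
Proof. by rewrite /signed_comm => ->; rewrite -mulrA -expr2 sqrr_sign mulr1. Qed.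

Lemma signed_commMr x y z k1 k2 :
  signed_comm x y k1 -> signed_comm x z k2 -> signed_comm x (y * z) (k1 (+) k2).
Proof.
rewrite /signed_comm signr_addb => hy hz.
rewrite mulrA hy -mulrA -(commr_sign z) mulrA -(mulrA y) hz !mulrA.
by rewrite -[LHS]mulrA (commr_sign ((-1) ^+ k2) k1) mulrA.
Qed.

Lemma signed_commMl x y z k1 k2 :
  signed_comm x z k1 -> signed_comm y z k2 -> signed_comm (x * y) z (k1 (+) k2).
Proof. by move=> /signed_commC hx /signed_commC hy; apply/signed_commC/signed_commMr. Qed.

Lemma signed_comm_prod (I : eqType) (s : seq I) (F : I -> R) (k : I -> bool) x :
  (forall i, i \in s -> signed_comm x (F i) (k i)) ->
  signed_comm x (\prod_(i <- s) F i) (\big[addb/false]_(i <- s) k i).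
Proof.
move=> hF; rewrite big_seq [X in signed_comm _ _ X]big_seq.
apply: (big_ind2 (signed_comm x)) => //.
- exact/signed_comm0/commr1.
- by move=> ? ? ? ?; apply: signed_commMr.
Qed.

End SignedCommutation.

Lemma signed_commZ (K : comPzRingType) (A : algType K) (u v : A) a b k :
  signed_comm u v k -> signed_comm (a *: u) (b *: v) k.
Proof.
rewrite /signed_comm => huv.
by rewrite -!scalerAl -!scalerAr huv -scalerAl !scalerA mulrC.
Qed.

Lemma addb_antipodal (P : bool -> bool -> bool) u v u' v' : u (+) v = u' (+) v' ->
  P u v (+) P (~~ u) (~~ v) = P u' v' (+) P (~~ u') (~~ v').
Proof. by case: u v u' v' => [] [] [] [] //= _; rewrite addbC. Qed.

Lemma big_addb_single (I : finType) (P : pred I) (F : I -> bool) (i0 : I) :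
  (forall i, P i -> i != i0 -> F i = false) ->
  \big[addb/false]_(i | P i) F i = P i0 && F i0.
Proof.
move=> F0; case Pi0: (P i0).
  by rewrite (bigD1 i0) //= big1 ?addbF // => i /andP[]; apply: F0.
by rewrite big1 // => i Pi; apply: F0 => //; apply: contraTneq Pi => ->; rewrite Pi0.
Qed.

Lemma big_addb_pred1_seq (T : eqType) (s : seq T) (t : T) (p : pred T) :
  uniq s -> (p t -> t \in s) -> \big[addb/false]_(x <- s) ((x == t) && p x) = p t.
Proof.
move=> us; have [pt /(_ isT) ts|npt _] := boolP (p t).
  by rewrite (bigD1_seq t) //= eqxx pt big1 ?addbF // => x /negbTE ->.
by rewrite big1 // => x; case: eqP => // -> _; apply: negbTE.
Qed.

Lemma big_addb_uniq_supp (T : eqType) (s1 s2 : seq T) (p : pred T) :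
  uniq s1 -> uniq s2 -> (forall x, p x -> x \in s1) -> (forall x, p x -> x \in s2) ->
  \big[addb/false]_(x <- s1) p x = \big[addb/false]_(x <- s2) p x.
Proof.
move=> u1 u2 p1 p2.
have filterE s : \big[addb/false]_(x <- s) p x = \big[addb/false]_(x <- filter p s) true.
  by rewrite big_filter [RHS]big_mkcond; apply: eq_bigr => x _; case: (p x).
rewrite !filterE; apply/perm_big/uniq_perm; rewrite ?filter_uniq // => x.
by rewrite !mem_filter; apply/andP/andP => -[px _]; split; rewrite // ?p1 ?p2.
Qed.

Section Integral.
Variable d : nat.

Lemma box_pts_uniq N : uniq (box_pts d N).
Proof.
rewrite map_inj_uniq ?enum_uniq // => f g /ffunP fg; apply/ffunP => i.
by have := fg i; rewrite !ffunE => /addIr [] /val_inj.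
Qed.

Lemma in_box_pts N (x : point d) : in_box N x -> x \in box_pts d N.
Proof.
move=> /forallP xN; apply/mapP.
have lt_shift i : (`|(x i + N%:Z)%R| < (N + N).+1)%N by have := xN i; lia.
exists [ffun i => Ordinal (lt_shift i)]; first by rewrite mem_enum.
by apply/ffunP => i; rewrite !ffunE /=; have := xN i; lia.
Qed.

Lemma big_box_dcells (phi : cochain d) N :
  \big[addb/false]_(C <- box_cells d N d) phi C =
  \big[addb/false]_(x <- box_pts d N) phi (dcell x).
Proof.
rewrite /box_cells big_allpairs; apply: eq_bigr => x _.
have -> : [set D : {set 'I_d} | #|D| == d] = [set setT].
  apply/setP => D; rewrite !inE; apply/idP/eqP => [/eqP D_d|->].
    by apply/eqP; rewrite eqEcard subsetT D_d cardsE card_ord leqnn.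
  by rewrite cardsE card_ord.
by rewrite enum_set1 big_seq1.
Qed.

Lemma integralE (phi : cochain d) (S : seq (point d)) :
  uniq S -> (forall x, phi (dcell x) -> x \in S) ->
  integral phi = \big[addb/false]_(x <- S) phi (dcell x).
Proof.
move=> uS phiS; rewrite /integral.
set N := epsilon _ _.
have phiN : forall x : point d, ~~ in_box N x -> phi (dcell x) = false.
  apply: (epsilon_spec (inhabits 0%N)
    (fun N => forall x : point d, ~~ in_box N x -> phi (dcell x) = false)).
  exists (\max_(x <- S) \max_i `|x i|%N) => x; apply: contraNF => phix.
  apply/forallP => i; apply: leq_trans (@leq_bigmax _ (fun i => `|x i|%N) i) _.
  exact: (@leq_bigmax_seq _ S xpredT (fun y => \max_i `|y i|%N) x (phiS x phix)).
rewrite big_box_dcells; apply: big_addb_uniq_supp => //; first exact: box_pts_uniq.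
by move=> x phix; apply: in_box_pts; apply: contraT => /phiN; rewrite phix.
Qed.

Lemma integral_addb (f g : cochain d) (S1 S2 : seq (point d)) :
  (forall x, f (dcell x) -> x \in S1) -> (forall x, g (dcell x) -> x \in S2) ->
  integral (fun C => f C (+) g C) = integral f (+) integral g.
Proof.
move=> fS1 gS2; set S := undup (S1 ++ S2).
have fS x : f (dcell x) -> x \in S by move/fS1; rewrite mem_undup mem_cat => ->.
have gS x : g (dcell x) -> x \in S by move/gS2; rewrite mem_undup mem_cat orbC => ->.
rewrite !(@integralE _ S) ?undup_uniq //; first exact: big_split.
by move=> x; case fx: (f (dcell x)) => /= gx; [exact: fS fx | exact: gS gx].
Qed.

End Integral.

Section CupOfFaces.
Variable d : nat.
Implicit Types (a b : cell d) (x : point d) (j : 'I_d) (L : {set 'I_d}).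
Implicit Types w : {ffun 'I_d -> option bool}.

Definition shift x j (s : bool) : point d := [ffun i => x i - ((i == j) && s : nat)%:Z].

Definition free_dirs j j' : {set 'I_d} := [set i | (i != j) && (i != j')].

Definition face_word j (s : bool) : {ffun 'I_d -> option bool} :=
  [ffun i => if i == j then Some s else None].

Lemma free_dirsC j j' : free_dirs j j' = free_dirs j' j.
Proof. by apply/setP => i; rewrite !inE andbC. Qed.

Lemma card_free_dirs j j' : j != j' -> #|free_dirs j j'| = d.-2.
Proof.
move=> jj'; have -> : free_dirs j j' = [set~ j] :\ j'.
  by apply/setP => i; rewrite !inE andbC.
by move: (cardsD1 j' [set~ j]); rewrite cardsC1 card_ord !inE eq_sym jj' /= => ->.
Qed.

Lemma shift_inj j s : injective (fun x => shift x j s).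
Proof.
move=> x y /ffunP xy; apply/ffunP => i.
by have := xy i; rewrite !ffunE => /addIr.
Qed.

Lemma subcell_face_word_eq a x j s : a.2 = [set~ j] ->
  (subcell (dcell x) (face_word j s) == a) = (shift a.1 j s == x).
Proof.
case: a => a1 a2 /= ->; rewrite /subcell xpair_eqE.
have -> : [set i in [set: 'I_d] | face_word j s i == None] = [set~ j].
  by apply/setP => i; rewrite !inE ffunE; case: (i == j).
rewrite eqxx andbT; apply/eqP/eqP => <-; apply/ffunP => i; rewrite !ffunE in_setT /=.
  by case: (i == j); case: s; rewrite ?addrK.
by case: (i == j); case: s; rewrite ?subrK.
Qed.

Lemma subcell_none a x w j : a.2 = [set~ j] -> subcell (dcell x) w == a ->
  forall i, (w i == None) = (i != j).
Proof.
by move=> a2 /eqP/(congr1 snd) /=; rewrite a2 => /setP ws i; have := ws i; rewrite !inE.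
Qed.

Lemma valid_pair_face_words x j j' : j != j' ->
  valid_pair (dcell x) (free_dirs j j')
    (face_word j (sigma (free_dirs j j') j)) (face_word j' (~~ sigma (free_dirs j j') j')).
Proof.
move=> jj'; apply/forallP => i; rewrite /= in_setT !inE !ffunE.
case: (eqVneq i j) => [->|ij]; first by rewrite eqxx /= (negbTE jj') eqxx.
by case: (eqVneq i j') => [->|ij'] //=; rewrite eqxx negbK eqxx orbT.
Qed.

Lemma card_ord_lt n : (n <= d)%N -> #|[set k : 'I_d | (k < n)%N]| = n.
Proof.
move=> n_d; have -> : [set k : 'I_d | (k < n)%N] = widen_ord n_d @: [set: 'I_n].
  apply/setP => k; rewrite inE; apply/idP/imsetP => [k_n|[i _ ->]]; last exact: (ltn_ord i).
  by exists (Ordinal k_n) => //; apply: val_inj.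
by rewrite card_imset ?cardsT ?card_ord // => i i' /(congr1 val) /= /ord_inj.
Qed.

Lemma sigma_free_dirs j j' : j != j' -> sigma (free_dirs j j') j = ~~ odd (j - (j' < j)).
Proof.
move=> jj'; rewrite /sigma.
have -> : [set k in free_dirs j j' | (k < j)%N] = [set k : 'I_d | (k < j)%N] :\ j'.
  apply/setP => k; rewrite !inE; case: (ltnP k j) => [kj|]; last by rewrite !andbF.
  suff -> : k != j by [].
  by apply: contraTneq kj => ->; rewrite ltnn.
move: (cardsD1 j' [set k : 'I_d | (k < j)%N]).
rewrite (card_ord_lt (ltnW (ltn_ord j))) inE => card_j.
by rewrite {2}card_j addKn.
Qed.

Lemma sigma_free_dirs_addb j j' : j != j' ->
  sigma (free_dirs j j') j (+) sigma (free_dirs j j') j' = ~~ (odd j (+) odd j').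
Proof.
move=> jj'; rewrite sigma_free_dirs // free_dirsC sigma_free_dirs 1?eq_sym //.
have : j != j' :> nat by [].
by case: ltngtP => // lt_jj' _; rewrite subn0 oddB ?(leq_ltn_trans (leq0n _) lt_jj') /=;
  case: (odd j); case: (odd j').
Qed.

Lemma codim1_cell_perp a : (0 < d)%N -> is_kcell d.-1 a ->
  exists2 j, perp a = Some j & a.2 = [set~ j].
Proof.
move=> d_gt0 /eqP card_a; rewrite /perp; case: pickP => [j /= ja|all_a].
  exists j => //; apply/eqP; rewrite eqEcard cardsC1 card_ord card_a leqnn andbT.
  by apply/subsetP => i ai; rewrite !inE; apply: contraNneq ja => <-.
have : a.2 = setT by apply/setP => i; rewrite inE; apply/negbFE/all_a.
by move=> a_full; move: card_a; rewrite a_full cardsE card_ord; lia.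
Qed.

Hypothesis d_ge2 : (2 <= d)%N.

Lemma cup_term_faces a b j j' x L w w' : a.2 = [set~ j] -> b.2 = [set~ j'] ->
  (L \subset [set: 'I_d]) && (#|L| == d.-2) -> valid_pair (dcell x) L w w' ->
  (subcell (dcell x) w == a) && (subcell (dcell x) w' == b) ->
  [/\ j != j', L = free_dirs j j', w = face_word j (sigma L j)
    & w' = face_word j' (~~ sigma L j')].
Proof.
move=> a2 b2 /andP[_ /eqP card_L] /forallP valid /andP[wa w'b].
have w_none := subcell_none a2 wa; have w'_none := subcell_none b2 w'b.
have L_free : L = free_dirs j j'.
  apply/setP => i; rewrite !inE; have := valid i; rewrite /= in_setT.
  case: (i \in L); first by case/andP; rewrite w_none w'_none => -> ->.
  case/orP => /andP [/eqP wi /eqP w'i].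
    by have := w_none i; rewrite wi /= => /esym/negbFE ->.
  by have := w'_none i; rewrite w'i /= => /esym/negbFE ->; rewrite andbF.
have jj' : j != j'.
  apply: contra_eqN card_L => /eqP jj'; rewrite L_free -jj'.
  have -> : free_dirs j j = [set~ j] by apply/setP => i; rewrite !inE andbb.
  by rewrite cardsC1 card_ord; lia.
have jL : j \notin L by rewrite L_free !inE eqxx.
have j'L : j' \notin L by rewrite L_free !inE eqxx andbF.
split => //; apply/ffunP => i; rewrite ffunE; case: eqP => [->|/eqP ij].
- have := valid j; rewrite in_setT (negbTE jL) w_none w'_none eqxx (negbTE jj') /=.
  by rewrite andbT orbF => /eqP.
- by apply/eqP; rewrite w_none.
- have := valid j'; rewrite in_setT (negbTE j'L) w_none w'_none eqxx (eq_sym j') (negbTE jj').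
  by rewrite andbF /= => /eqP.
- by apply/eqP; rewrite w'_none.
Qed.

Lemma cup_ind_dcell a b j j' x : a.2 = [set~ j] -> b.2 = [set~ j'] ->
  cup d.-2 (ind a) (ind b) (dcell x) =
  [&& j != j', shift a.1 j (sigma (free_dirs j j') j) == x
     & shift b.1 j' (~~ sigma (free_dirs j j') j') == x].
Proof.
move=> a2 b2; rewrite /cup /ind /=.
have faces := cup_term_faces (x := x) a2 b2.
case: (eqVneq j j') => [jj'|jj'] /=.
  rewrite big1 // => M PM; rewrite big1 // => w _; rewrite big1 // => w' valid.
  by apply/negbTE/negP => /(faces _ _ _ PM valid) []; rewrite jj' eqxx.
set L := free_dirs j j'; set s := sigma L j; set s' := ~~ sigma L j'.
have PL : (L \subset [set: 'I_d]) && (#|L| == d.-2) by rewrite subsetT card_free_dirs ?eqxx.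
rewrite (big_addb_single (i0 := L)) => [|M PM ML]; last first.
  rewrite big1 // => w _; rewrite big1 // => w' valid; apply/negbTE/negP.
  by move=> /(faces _ _ _ PM valid) [_ M_free _ _]; rewrite M_free eqxx in ML.
rewrite PL (big_addb_single (i0 := face_word j s)) => [|w _ ws]; last first.
  rewrite big1 // => w' valid; apply/negbTE/negP.
  by move=> /(faces _ _ _ PL valid) [_ _ w_face _]; rewrite w_face eqxx in ws.
rewrite (big_addb_single (i0 := face_word j' s')) => [|w' valid w's]; last first.
  apply/negbTE/negP.
  by move=> /(faces _ _ _ PL valid) [_ _ _ w'_face]; rewrite w'_face eqxx in w's.
by rewrite valid_pair_face_words // !subcell_face_word_eq.
Qed.

Definition cup_integral a b : bool := integral (cup d.-2 (ind a) (ind b)).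

Lemma cup_ind_supp a b j j' : a.2 = [set~ j] -> b.2 = [set~ j'] ->
  forall x, cup d.-2 (ind a) (ind b) (dcell x) ->
  x \in [:: shift a.1 j (sigma (free_dirs j j') j)].
Proof.
by move=> a2 b2 x; rewrite (cup_ind_dcell _ a2 b2) => /and3P[_ /eqP <- _]; rewrite mem_seq1.
Qed.

Lemma cup_integralE a b j j' : a.2 = [set~ j] -> b.2 = [set~ j'] ->
  cup_integral a b = (j != j') &&
    (shift b.1 j' (~~ sigma (free_dirs j j') j') == shift a.1 j (sigma (free_dirs j j') j)).
Proof.
move=> a2 b2; rewrite /cup_integral (integralE _ (cup_ind_supp a2 b2)) //.
by rewrite big_seq1 (cup_ind_dcell _ a2 b2) eqxx.
Qed.

Lemma cup_integral_addb_shift a b j j' t t' : a.2 = [set~ j] -> b.2 = [set~ j'] ->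
  t (+) t' = odd j (+) odd j' ->
  cup_integral a b (+) cup_integral b a =
  (shift a.1 j t != shift b.1 j' t') (+) (shift a.1 j (~~ t) != shift b.1 j' (~~ t')).
Proof.
move=> a2 b2 tt'; rewrite (cup_integralE a2 b2) (cup_integralE b2 a2).
case: (eqVneq j j') tt' => [<-|jj' tt'] /=.
  by rewrite addbb; case: t; case: t' => //= _; rewrite !(inj_eq (@shift_inj j _)) addbb.
rewrite [free_dirs j' j]free_dirsC addbN addNb negbK [shift b.1 _ _ == _]eq_sym.
set s := sigma (free_dirs j j').
rewrite -(addb_antipodal (fun u v => shift a.1 j u == shift b.1 j' v)
  (u := s j) (v := ~~ s j') (u' := t) (v' := t')); first by rewrite negbK.
by rewrite tt' addbN sigma_free_dirs_addb // negbK.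
Qed.

End CupOfFaces.

Section Fermions.
Variables (d : nat) (R : algType algC) (gamma gamma' : cell d -> R).
Hypothesis anti : forall x y, x != y ->
  gamma (dcell x) * gamma (dcell y) = - (gamma (dcell y) * gamma (dcell x)).
Hypothesis anti' : forall x y, x != y ->
  gamma' (dcell x) * gamma' (dcell y) = - (gamma' (dcell y) * gamma' (dcell x)).
Hypothesis anti_mix : forall x y,
  gamma (dcell x) * gamma' (dcell y) = - (gamma' (dcell y) * gamma (dcell x)).
Implicit Types p q r s : point d.

Lemma majorana_bilinear_signed_comm p q r s :
  signed_comm (gamma (dcell p) * gamma' (dcell q)) (gamma (dcell r) * gamma' (dcell s))
    ((p != r) (+) (q != s)).
Proof.
have gg x y : signed_comm (gamma (dcell x)) (gamma (dcell y)) (x != y).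
  by case: eqVneq => [->|/anti]; [apply/signed_comm0 | apply: signed_commN].
have g'g' x y : signed_comm (gamma' (dcell x)) (gamma' (dcell y)) (x != y).
  by case: eqVneq => [->|/anti']; [apply/signed_comm0 | apply: signed_commN].
have gg' x y : signed_comm (gamma (dcell x)) (gamma' (dcell y)) true.
  exact/signed_commN/anti_mix.
have := signed_commMl (signed_commMr (gg p r) (gg' p s))
                      (signed_commMr (signed_commC (gg' r q)) (g'g' q s)).
by rewrite -addbA (addbA true) addbb.
Qed.

Lemma LR_shift (a : cell d) j : perp a = Some j ->
  LR a = (dcell (shift a.1 j (odd (j.+1 + d))), dcell (shift a.1 j (~~ odd (j.+1 + d)))).
Proof.
move=> a_j; rewrite /LR a_j.
have -> : minus_cell a j = dcell (shift a.1 j true).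
  by congr dcell; apply/ffunP => i; rewrite !ffunE andbT.
have -> : plus_cell a = dcell (shift a.1 j false).
  by congr dcell; apply/ffunP => i; rewrite !ffunE andbF subr0.
by case: odd.
Qed.

Hypothesis d_ge2 : (2 <= d)%N.

Lemma S_op_signed_comm c c' : is_kcell d.-1 c -> is_kcell d.-1 c' ->
  signed_comm (S_op gamma gamma' c) (S_op gamma gamma' c')
    (cup_integral c c' (+) cup_integral c' c).
Proof.
have perp_c := codim1_cell_perp (ltnW d_ge2).
move=> /perp_c [j c_j c2] /perp_c [j' c'_j' c'2].
rewrite /S_op (LR_shift c_j) (LR_shift c'_j')
  (cup_integral_addb_shift d_ge2 c2 c'2 (t := odd (j.+1 + d)) (t' := odd (j'.+1 + d))).
  exact/signed_commZ/majorana_bilinear_signed_comm.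
by rewrite !oddD /=; case: odd; case: odd; case: odd.
Qed.

End Fermions.

Section Bosons.
Variables (d : nat) (B : nzRingType) (X Z : cell d -> B).
Hypothesis d_ge2 : (2 <= d)%N.
Hypothesis XZ : forall c, is_kcell d.-1 c -> X c * Z c = - (Z c * X c).
Hypothesis XX : forall c c', is_kcell d.-1 c -> is_kcell d.-1 c' -> c != c' ->
  X c * X c' = X c' * X c.
Hypothesis ZZ : forall c c', is_kcell d.-1 c -> is_kcell d.-1 c' -> c != c' ->
  Z c * Z c' = Z c' * Z c.
Hypothesis XZ' : forall c c', is_kcell d.-1 c -> is_kcell d.-1 c' -> c != c' ->
  X c * Z c' = Z c' * X c.
Implicit Types (c y : cell d) (s : seq (cell d)) (f : cell d -> bool).

Let Zs s f := \prod_(y <- s) (if f y then Z y else 1).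

(* [cup_integral y c] forces y.1 to lie within distance 1 of c.1, which bounds
   the box radius chosen by [epsilon] in [U_op]. *)
Lemma U_op_prod c : is_kcell d.-1 c ->
  exists s, [/\ uniq s, all (is_kcell d.-1) s,
    (forall y, is_kcell d.-1 y -> cup_integral y c -> y \in s)
    & U_op X Z c = X c * Zs s (fun y => cup_integral y c)].
Proof.
move=> kc; rewrite /U_op; set N := epsilon _ _.
have perp_c := codim1_cell_perp (ltnW d_ge2).
have N_bound : forall y, is_kcell d.-1 y -> ~~ in_box N y.1 -> cup_integral y c = false.
  apply: (epsilon_spec (inhabits 0%N) (fun N => forall y, is_kcell d.-1 y ->
    ~~ in_box N y.1 -> cup_integral y c = false)).
  have [j _ c2] := perp_c _ kc.
  exists (\max_i `|c.1 i|%N).+1 => y /perp_c [j' _ y2]; apply: contraNF.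
  rewrite (cup_integralE d_ge2 y2 c2) => /andP[_ /eqP /ffunP y_c].
  apply/forallP => i; have := y_c i; rewrite !ffunE.
  have := @leq_bigmax _ (fun i => `|c.1 i|%N) i.
  by case: (_ && _); case: (_ && _) => /=; lia.
exists (box_cells d N d.-1); split => //.
- apply: allpairs_uniq => [||[x D] [x' D'] _ _ //]; [exact: box_pts_uniq | exact: enum_uniq].
- by apply/allP => y /allpairsP [[x D] [_ + ->]]; rewrite mem_enum inE.
- move=> y ky cyc; apply/allpairsP; exists (y.1, y.2); split; last by case: y {ky cyc}.
    by apply: in_box_pts; apply: contraT => /(N_bound _ ky); rewrite cyc.
  by rewrite mem_enum inE.
Qed.

Lemma X_signed_comm_Zs c s f : is_kcell d.-1 c -> uniq s -> all (is_kcell d.-1) s ->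
  (f c -> c \in s) -> signed_comm (X c) (Zs s f) (f c).
Proof.
move=> kc us /allP ks cs; rewrite -(big_addb_pred1_seq us cs).
apply: signed_comm_prod => y /ks ky.
case: (f y); rewrite ?andbT ?andbF; last exact/signed_comm0/commr1.
case: eqVneq => [->|yc]; first exact/signed_commN/XZ.
by apply/signed_comm0/XZ'; rewrite // eq_sym.
Qed.

Lemma Zs_comm s s' f f' : all (is_kcell d.-1) s -> all (is_kcell d.-1) s' ->
  GRing.comm (Zs s f) (Zs s' f').
Proof.
move=> /allP ks /allP ks'; rewrite /Zs /= (big_seq _ _ s'); apply: commr_prod => y' ys'.
apply/commr_sym; rewrite (big_seq _ _ s); apply: commr_prod => y ys.
case: (f y); case: (f' y'); rewrite /GRing.comm ?mulr1 ?mul1r //.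
by case: (eqVneq y' y) => [->|y'y] //; apply: ZZ; [apply: ks' | apply: ks |].
Qed.

Lemma U_op_signed_comm c c' : is_kcell d.-1 c -> is_kcell d.-1 c' ->
  signed_comm (U_op X Z c) (U_op X Z c') (cup_integral c c' (+) cup_integral c' c).
Proof.
move=> kc kc'; have [s [us ks cs ->]] := U_op_prod kc.
have [s' [us' ks' cs' ->]] := U_op_prod kc'.
have XcXc' : signed_comm (X c) (X c') false.
  by apply: signed_comm0; case: (eqVneq c c') => [->|cc']; [apply: commr_refl | apply: XX].
have Xc_Zs' := X_signed_comm_Zs (f := fun y => cup_integral y c') kc us' ks' (cs' c kc).
have Xc'_Zs := X_signed_comm_Zs (f := fun y => cup_integral y c) kc' us ks (cs c' kc').
have := signed_commMl (signed_commMr XcXc' Xc_Zs')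
  (signed_commMr (signed_commC Xc'_Zs) (signed_comm0 (Zs_comm _ _ ks ks'))).
by rewrite addFb addbF.
Qed.

End Bosons.

Theorem lemma1 (d : nat) (hd : (2 <= d)%N)
  (* fermionic algebra: a complex *-algebra with Majoranas on d-cells *)
  (R : algType algC) (star : R -> R)
  (star_invol : forall x, star (star x) = x)
  (star_add : forall x y, star (x + y) = star x + star y)
  (star_mul : forall x y, star (x * y) = star y * star x)
  (star_scale : forall (a : algC) x, star (a *: x) = a^* *: star x)
  (gamma gamma' : cell d -> R)
  (herm : forall x, star (gamma (dcell x)) = gamma (dcell x))
  (herm' : forall x, star (gamma' (dcell x)) = gamma' (dcell x))
  (sq : forall x, gamma (dcell x) * gamma (dcell x) = 1)
  (sq' : forall x, gamma' (dcell x) * gamma' (dcell x) = 1)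
  (anti : forall x y, x != y ->
     gamma (dcell x) * gamma (dcell y) = - (gamma (dcell y) * gamma (dcell x)))
  (anti' : forall x y, x != y ->
     gamma' (dcell x) * gamma' (dcell y) = - (gamma' (dcell y) * gamma' (dcell x)))
  (anti_mix : forall x y,
     gamma (dcell x) * gamma' (dcell y) = - (gamma' (dcell y) * gamma (dcell x)))
  (* bosonic algebra: Pauli operators on (d-1)-cells *)
  (B : nzRingType) (X Z : cell d -> B)
  (X2 : forall c, is_kcell d.-1 c -> X c * X c = 1)
  (Z2 : forall c, is_kcell d.-1 c -> Z c * Z c = 1)
  (XZ : forall c, is_kcell d.-1 c -> X c * Z c = - (Z c * X c))
  (XX : forall c c', is_kcell d.-1 c -> is_kcell d.-1 c' -> c != c' ->
     X c * X c' = X c' * X c)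
  (ZZ : forall c c', is_kcell d.-1 c -> is_kcell d.-1 c' -> c != c' ->
     Z c * Z c' = Z c' * Z c)
  (XZ' : forall c c', is_kcell d.-1 c -> is_kcell d.-1 c' -> c != c' ->
     X c * Z c' = Z c' * X c)
  (c c' : cell d) (hc : is_kcell d.-1 c) (hc' : is_kcell d.-1 c') :
  let e := integral (fun C => cup d.-2 (ind c) (ind c') C
                              (+) cup d.-2 (ind c') (ind c) C) in
  S_op gamma gamma' c * S_op gamma gamma' c'
    = S_op gamma gamma' c' * S_op gamma gamma' c * (-1) ^+ e
  /\ U_op X Z c * U_op X Z c' = U_op X Z c' * U_op X Z c * (-1) ^+ e.
Proof.
have [j _ c2] := codim1_cell_perp (ltnW hd) hc.
have [j' _ c'2] := codim1_cell_perp (ltnW hd) hc'.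
rewrite /= (integral_addb (cup_ind_supp hd c2 c'2) (cup_ind_supp hd c'2 c2)).
split; first exact: S_op_signed_comm.
exact: U_op_signed_comm.
Qed.
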